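(* Let $H$ be a maximal outerplanar graph of diameter $3$ with maximum degree $\Delta=\Delta(H)$, containing vertices $v_0,v_1,\dots,v_5$ which induce a copy of $G_6^1$ (with edges $v_1v_0, v_0v_4, v_4v_3, v_3v_5, v_5v_2, v_2v_1, v_0v_2, v_0v_3, v_2v_3$), and such that $d(v_0)=d(v_2)=d(v_3)=\Delta$. Then $\chi'_{st}(H)\ge \Delta+2$.
   Context: A star edge coloring of a graph $G$ is a proper edge coloring of $G$ in which no path or cycle with four edges is bichromatic. The star chromatic index $\chi'_{st}(G)$ is the minimum number of colors in a star edge coloring of $G$. An outerplanar graph is a graph drawable in the plane without crossings with all vertices on the outer face; it is maximal outerplanar if adding any edge between two nonadjacent vertices yields a non-outerplanar graph. $d(v)$ is the degree of $v$ in $H$. (In the paper this graph is denoted $H_{n_\Delta}$.) *)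

From mathcomp Require Import all_boot.
Set Implicit Arguments. Unset Strict Implicit. Unset Printing Implicit Defensive.

Definition simple_graph (T : finType) (e : rel T) : Prop :=
  symmetric e /\ irreflexive e.

Definition deg (T : finType) (e : rel T) (x : T) : nat := #|[set y | e x y]|.

Definition max_deg (T : finType) (e : rel T) : nat := \max_(x : T) deg e x.

Fixpoint walk_le (T : finType) (e : rel T) (k : nat) (x y : T) : bool :=
  match k with
  | 0 => x == y
  | k'.+1 => walk_le e k' x y || [exists z, e x z && walk_le e k' z y]
  end.

Definition diameter_eq (T : finType) (e : rel T) (d : nat) : Prop :=
  (forall x y : T, walk_le e d x y) /\
  (exists x y : T, ~~ walk_le e d.-1 x y) /\ 0 < d.

(* Outerplanarity, combinatorially: the vertices can be placed in convex
   position (injective labelling f along a circle) so that no two edges,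
   drawn as chords, cross.  Two chords xy and uv with four distinct ends
   cross iff exactly one of u, v lies strictly between x and y. *)
Definition strictly_between (T : finType) (f : T -> nat) (x y w : T) : bool :=
  (minn (f x) (f y) < f w) && (f w < maxn (f x) (f y)).

Definition outerplanar (T : finType) (e : rel T) : Prop :=
  exists f : T -> nat, injective f /\
    forall x y u v : T, e x y -> e u v -> uniq [:: x; y; u; v] ->
      strictly_between f x y u = strictly_between f x y v.

Definition add_edge (T : finType) (e : rel T) (u v : T) : rel T :=
  fun x y => [|| e x y, (x == u) && (y == v) | (x == v) && (y == u)].

Definition maximal_outerplanar (T : finType) (e : rel T) : Prop :=
  outerplanar e /\
  forall u v : T, u != v -> ~~ e u v -> ~ outerplanar (add_edge e u v).

Definition edge_coloring (T : finType) (e : rel T) (k : nat)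
    (col : T -> T -> 'I_k) : Prop :=
  forall x y, e x y -> col x y = col y x.

Definition proper_edge_coloring (T : finType) (e : rel T) (k : nat)
    (col : T -> T -> 'I_k) : Prop :=
  edge_coloring e col /\
  forall x y z, e x y -> e x z -> y != z -> col x y != col x z.

(* Star edge coloring: proper, and no path or cycle with four edges
   v0 v1 v2 v3 v4 (v0..v3 distinct, v4 distinct from v1..v3, v4 = v0
   allowed for a cycle) is bichromatic (uses at most two colors). *)
Definition star_edge_coloring (T : finType) (e : rel T) (k : nat)
    (col : T -> T -> 'I_k) : Prop :=
  proper_edge_coloring e col /\
  forall v0 v1 v2 v3 v4 : T,
    uniq [:: v0; v1; v2; v3] -> uniq [:: v1; v2; v3; v4] ->
    e v0 v1 -> e v1 v2 -> e v2 v3 -> e v3 v4 ->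
    2 < size (undup [:: col v0 v1; col v1 v2; col v2 v3; col v3 v4]).

Definition star_edge_colorable (T : finType) (e : rel T) (k : nat) : Prop :=
  exists col : T -> T -> 'I_k, star_edge_coloring e col.

From mathcomp Require Import all_boot.
Set Implicit Arguments. Unset Strict Implicit. Unset Printing Implicit Defensive.

(* If k <= Delta + 1 colors are used, each of v0, v2, v3 misses at most one
   color.  In a triangle xyw, if the color of yw appears at x then the color
   of xy is missing at w, since otherwise a path of length four alternates
   between these two colors; symmetrically the color of xw is missing at y.
   If moreover y and w miss at most one color and have a common neighbour o
   other than x, then there are edges wz and yz' colored like yo and wo, and
   the path z w o y z' alternates between two colors.  Apply this to the
   triangle v0 v2 v3 with the outside neighbours v5, v4, v1 of its sides. *)

Section StarEdgeColoring.

Variables (T : finType) (e : rel T) (k : nat) (col : T -> T -> 'I_k).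
Hypotheses (sg : simple_graph e) (sc : star_edge_coloring e col).

Let edge_sym x y : e x y -> e y x.
Proof. by rewrite sg.1. Qed.

Let edge_neq x y : e x y -> x != y.
Proof. by apply: contraTneq => ->; rewrite sg.2. Qed.

Let col_sym x y : e x y -> col x y = col y x := sc.1.1 x y.

Lemma col_inj x y z : e x y -> e x z -> col x y = col x z -> y = z.
Proof.
move=> exy exz; apply: contra_eq => neq_yz.
exact: sc.1.2 x y z exy exz neq_yz.
Qed.

Lemma col_adj_neq x y z : e x y -> e y z -> x != z -> col x y != col y z.
Proof.
move=> exy eyz nxz; rewrite col_sym //; apply: contra_neq nxz.
exact: col_inj (edge_sym exy) eyz.
Qed.

Lemma alternating_walk_monochromatic v0 v1 v2 v3 v4 :
  e v0 v1 -> e v1 v2 -> e v2 v3 -> e v3 v4 ->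
  col v0 v1 = col v2 v3 -> col v1 v2 = col v3 v4 -> col v0 v1 = col v1 v2.
Proof.
move=> e01 e12 e23 e34 a02 b13; apply/eqP/negPn/negP => ab.
have n02 : v0 != v2.
  by apply: contraNneq ab => E; subst v2; rewrite (col_sym e01).
have n13 : v1 != v3.
  by apply: contraNneq ab => E; subst v3; rewrite a02 (col_sym e23).
have n24 : v2 != v4.
  by apply: contraNneq ab => E; subst v4; rewrite a02 b13 (col_sym e34).
have n03 : v0 != v3.
  apply: contraTneq e12 => E; subst v3.
  suff -> : v1 = v2 by rewrite sg.2.
  by apply: (col_inj e01 (edge_sym e23)); rewrite a02 (col_sym e23).
have n14 : v1 != v4.
  apply: contraTneq e23 => E; subst v4.
  suff -> : v2 = v3 by rewrite sg.2.
  by apply: (col_inj e12 (edge_sym e34)); rewrite b13 (col_sym e34).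
have := sc.2 v0 v1 v2 v3 v4.
rewrite /= !inE !negb_or (edge_neq e01) (edge_neq e12) (edge_neq e23).
rewrite (edge_neq e34) n02 n03 n13 n14 n24 => /(_ isT isT e01 e12 e23 e34).
by rewrite -a02 -b13 (negbTE ab) !eqxx !orbT.
Qed.

Definition colors_at x := col x @: [set y | e x y].

Lemma card_colors_at x : #|colors_at x| = deg e x.
Proof. by rewrite card_in_imset // => y z; rewrite !inE; apply: col_inj. Qed.

Lemma colors_at_saturated x c c' :
  k <= (deg e x).+1 -> c \notin colors_at x -> c' != c -> c' \in colors_at x.
Proof.
move=> kx cx neq_c'c.
have /eqP/setP/(_ c') : c |: colors_at x == setT.
  by rewrite eqEcard subsetT cardsT card_ord cardsU1 cx card_colors_at.
by rewrite !inE (negbTE neq_c'c).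
Qed.

Lemma colors_at_triangle x y w :
  e x y -> e y w -> e w x ->
  col y w \in colors_at x -> col x y \notin colors_at w.
Proof.
move=> exy eyw ewx /imsetP[p]; rewrite inE => exp cp.
apply/negP => /imsetP[z]; rewrite inE => ewz cz.
have := alternating_walk_monochromatic (edge_sym exp) exy eyw ewz _ cz.
rewrite -(col_sym exp) -cp => /(_ erefl) /eqP.
by rewrite eq_sym (negbTE (col_adj_neq exy eyw (edge_neq (edge_sym ewx)))).
Qed.

Lemma no_triangle_missing_pair x y w o :
  e x y -> e y w -> e w x -> e y o -> e w o -> o != x ->
  k <= (deg e y).+1 -> k <= (deg e w).+1 ->
  col x w \notin colors_at y -> col x y \notin colors_at w -> False.
Proof.
move=> exy eyw ewx eyo ewo nox ky kw cy cw.
have /imsetP[z'] : col w o \in colors_at y.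
  apply: colors_at_saturated cy _ => //.
  by rewrite -(col_sym ewx) (col_sym ewo) col_adj_neq // edge_sym.
rewrite inE => eyz' cz'.
have /imsetP[z] : col y o \in colors_at w.
  apply: colors_at_saturated cw _ => //.
  by rewrite (col_sym exy) (col_sym eyo) col_adj_neq // edge_sym.
rewrite inE => ewz cz.
have := alternating_walk_monochromatic (edge_sym ewz) ewo (edge_sym eyo) eyz'.
rewrite -(col_sym ewz) -cz (col_sym eyo) => /(_ erefl cz') /eqP.
rewrite eq_sym (negbTE (col_adj_neq ewo (edge_sym eyo) _)) //.
exact: edge_neq (edge_sym eyw).
Qed.

Lemma triangle_opposite_color_missing x y w o :
  e x y -> e y w -> e w x -> e y o -> e w o -> o != x ->
  k <= (deg e y).+1 -> k <= (deg e w).+1 ->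
  col y w \notin colors_at x.
Proof.
move=> exy eyw ewx eyo ewo nox ky kw; apply/negP => cx.
have cw := colors_at_triangle exy eyw ewx cx.
have cy : col x w \notin colors_at y.
  apply: colors_at_triangle (edge_sym ewx) (edge_sym eyw) (edge_sym exy) _.
  by rewrite -(col_sym eyw).
exact: no_triangle_missing_pair exy eyw ewx eyo ewo nox ky kw cy cw.
Qed.

End StarEdgeColoring.

Theorem theorem3p4 (T : finType) (e : rel T) (v0 v1 v2 v3 v4 v5 : T) :
  simple_graph e ->
  maximal_outerplanar e ->
  diameter_eq e 3 ->
  uniq [:: v0; v1; v2; v3; v4; v5] ->
  (* edges of G_6^1 *)
  e v1 v0 -> e v0 v4 -> e v4 v3 -> e v3 v5 -> e v5 v2 -> e v2 v1 ->
  e v0 v2 -> e v0 v3 -> e v2 v3 ->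
  (* non-edges (induced copy) *)
  ~~ e v0 v5 -> ~~ e v1 v3 -> ~~ e v1 v4 -> ~~ e v1 v5 ->
  ~~ e v2 v4 -> ~~ e v4 v5 ->
  deg e v0 = max_deg e -> deg e v2 = max_deg e -> deg e v3 = max_deg e ->
  forall k : nat, star_edge_colorable e k -> max_deg e + 2 <= k.
Proof.
move=> sg _ _ uniq_v e10 e04 e43 e35 e52 e21 e02 e03 e23 _ _ _ _ _ _
  d0 d2 d3 k [col sc].
have col_sym := sc.1.1.
rewrite leqNgt; apply/negP; rewrite addn2 ltnS => kD.
have [k0 k2 k3] : [/\ k <= (deg e v0).+1, k <= (deg e v2).+1 & k <= (deg e v3).+1].
  by rewrite d0 d2 d3.
have n50 : v5 != v0 by apply: contraTneq uniq_v => ->; rewrite /= !inE eqxx !orbT.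
have n42 : v4 != v2 by apply: contraTneq uniq_v => ->; rewrite /= !inE eqxx !orbT /= ?andbF.
have n13 : v1 != v3 by apply: contraTneq uniq_v => ->; rewrite /= !inE eqxx !orbT /= ?andbF.
have [e30 e32 e20] : [/\ e v3 v0, e v3 v2 & e v2 v0].
  by rewrite (sg.1 v3 v0) (sg.1 v3 v2) (sg.1 v2 v0).
have [e25 e34 e01] : [/\ e v2 v5, e v3 v4 & e v0 v1].
  by rewrite (sg.1 v2 v5) (sg.1 v3 v4) (sg.1 v0 v1).
have c0 : col v3 v2 \notin colors_at e col v0.
  rewrite -col_sym //.
  exact: (triangle_opposite_color_missing sg sc e02 e23 e30 e25 e35 n50 k2 k3).
have c2 : col v3 v0 \notin colors_at e col v2.
  rewrite -col_sym //.
  exact: (triangle_opposite_color_missing sg sc e20 e03 e32 e04 e34 n42 k0 k3).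
exact: (no_triangle_missing_pair sg sc e30 e02 e23 e01 e21 n13 k0 k2 c0 c2).
Qed.
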